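(* Let $A_1,\dots,A_m\in\mathbb{S}^n$, $b\in\mathbb{R}^m$, $C\in\mathbb{S}^n$, and let Assumption 1 hold for some $p$, with $m'$ the associated dimension. Let $Y\in\mathcal{M}_p$ be a second-order critical point of (P). If $\operatorname{rank}(Y)<p$, or if $\operatorname{rank}(Y)=p$ and $\dim\mathcal{F}_{YY^\top}<\frac{p(p+1)}{2}-m'+p$, then $Y$ is globally optimal for (P) and $X=YY^\top$ is globally optimal for (SDP).
   Context: $\mathbb{S}^n$ is the space of real symmetric $n\times n$ matrices; $\langle U,V\rangle=\operatorname{tr}(U^\top V)$. $\mathcal{A}:\mathbb{S}^n\to\mathbb{R}^m$, $\mathcal{A}(X)_i=\langle A_i,X\rangle$, adjoint $\mathcal{A}^*(\nu)=\sum_i\nu_iA_i$. (SDP): minimize $\langle C,X\rangle$ over $X\in\mathcal{C}=\{X\in\mathbb{S}^n:\mathcal{A}(X)=b,\ X\succeq0\}$ (assumed non-empty). $\mathcal{M}_p=\{Y\in\mathbb{R}^{n\times p}:\mathcal{A}(YY^\top)=b\}$; (P): minimize $g(Y)=\langle CY,Y\rangle$ over $\mathcal{M}_p$. Assumption 1 (for $p$ with $\mathcal{M}_p\ne\emptyset$): either (a) $A_1Y,\dots,A_mY$ are linearly independent for all $Y\in\mathcal{M}_p$, or (b) $\operatorname{span}\{A_1Y,\dots,A_mY\}$ has constant dimension for all $Y$ in an open neighborhood of $\mathcal{M}_p$ in $\mathbb{R}^{n\times p}$; in either case $m'$ denotes the dimension of $\operatorname{span}\{A_1Y,\dots,A_mY\}$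 for $Y\in\mathcal{M}_p$. For $Y\in\mathcal{M}_p$: $T_Y=\{\dot Y:\langle A_iY,\dot Y\rangle=0\ \forall i\}$; $G_{ij}=\langle A_iY,A_jY\rangle$; $\mu=G^\dagger\mathcal{A}(CYY^\top)$; $S(Y)=C-\mathcal{A}^*(\mu)$. $Y$ is second-order critical if $S(Y)Y=0$ and $\langle\dot Y,S(Y)\dot Y\rangle\ge0$ for all $\dot Y\in T_Y$. A face of the convex set $\mathcal{C}$ is a convex subset $\mathcal{F}\subseteq\mathcal{C}$ such that every closed segment in $\mathcal{C}$ with a relative interior point in $\mathcal{F}$ has both endpoints in $\mathcal{F}$; for $X\in\mathcal{C}$, $\mathcal{F}_X$ is the unique face of $\mathcal{C}$ containing $X$ in its relative interior, and its dimension is that of its affine hull. *)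

From HB Require Import structures.
From mathcomp Require Import all_boot all_order all_algebra.
From mathcomp Require Import reals.
Set Implicit Arguments. Unset Strict Implicit. Unset Printing Implicit Defensive.
Import Order.TTheory GRing.Theory Num.Theory.
Local Open Scope ring_scope.

Definition inner (R : realType) (k l : nat) (U V : 'M[R]_(k, l)) : R :=
  \tr (U^T *m V).

Definition frob2 (R : realType) (k l : nat) (U : 'M[R]_(k, l)) : R := inner U U.

Definition symm (R : realType) (n : nat) (X : 'M[R]_n) : Prop := X^T = X.

Definition psd (R : realType) (n : nat) (X : 'M[R]_n) : Prop :=
  forall v : 'cV[R]_n, 0 <= (v^T *m X *m v) 0 0.

Definition Aop (R : realType) (n m : nat) (A : 'I_m -> 'M[R]_n) (X : 'M[R]_n)
  : 'cV[R]_m := \col_i inner (A i) X.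

Definition Aadj (R : realType) (n m : nat) (A : 'I_m -> 'M[R]_n) (nu : 'cV[R]_m)
  : 'M[R]_n := \sum_i nu i 0 *: A i.

Definition feasC (R : realType) (n m : nat) (A : 'I_m -> 'M[R]_n) (b : 'cV[R]_m)
  (X : 'M[R]_n) : Prop := symm X /\ Aop A X = b /\ psd X.

Definition Mp (R : realType) (n m p : nat) (A : 'I_m -> 'M[R]_n) (b : 'cV[R]_m)
  (Y : 'M[R]_(n, p)) : Prop := Aop A (Y *m Y^T) = b.

Definition gobj (R : realType) (n p : nat) (C : 'M[R]_n) (Y : 'M[R]_(n, p)) : R :=
  inner (C *m Y) Y.

Definition AYs (R : realType) (n m p : nat) (A : 'I_m -> 'M[R]_n) (Y : 'M[R]_(n, p))
  : seq 'M[R]_(n, p) := [seq A i *m Y | i <- enum 'I_m].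

Definition AYspan (R : realType) (n m p : nat) (A : 'I_m -> 'M[R]_n)
  (Y : 'M[R]_(n, p)) : {vspace 'M[R]_(n, p)} := (<< AYs A Y >>)%VS.

Definition Assumption1 (R : realType) (n m : nat) (p : nat) (A : 'I_m -> 'M[R]_n)
  (b : 'cV[R]_m) : Prop :=
  (forall Y : 'M[R]_(n, p), Mp A b Y -> free (AYs A Y))
  \/
  (* (b) constant dimension of the span on an open neighbourhood of M_p
     (an open set containing M_p: every Y in M_p has a Euclidean ball in it) *)
  (exists (U : 'M[R]_(n, p) -> Prop) (d : nat),
     (forall Z, U Z -> exists2 eps : R, 0 < eps &
                  forall W, frob2 (W - Z) < eps -> U W) /\
     (forall Y, Mp A b Y -> U Y) /\
     (forall Y, U Y -> \dim (AYspan A Y) = d)).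

Definition TY (R : realType) (n m p : nat) (A : 'I_m -> 'M[R]_n) (Y Yd : 'M[R]_(n, p))
  : Prop := forall i, inner (A i *m Y) Yd = 0.

Definition Gram (R : realType) (n m p : nat) (A : 'I_m -> 'M[R]_n) (Y : 'M[R]_(n, p))
  : 'M[R]_m := \matrix_(i, j) inner (A i *m Y) (A j *m Y).

Definition is_MP_pinv (R : realType) (m : nat) (G H : 'M[R]_m) : Prop :=
  [/\ G *m H *m G = G, H *m G *m H = H, (G *m H)^T = G *m H & (H *m G)^T = H *m G].

Definition Smat (R : realType) (n m p : nat) (A : 'I_m -> 'M[R]_n) (C : 'M[R]_n)
  (Y : 'M[R]_(n, p)) (H : 'M[R]_m) : 'M[R]_n :=
  C - Aadj A (H *m Aop A (C *m Y *m Y^T)).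

(* second-order criticality (H is the (unique) pseudo-inverse of G) *)
Definition soc (R : realType) (n m p : nat) (A : 'I_m -> 'M[R]_n) (C : 'M[R]_n)
  (Y : 'M[R]_(n, p)) : Prop :=
  exists H : 'M[R]_m, is_MP_pinv (Gram A Y) H /\
    Smat A C Y H *m Y = 0 /\
    (forall Yd, TY A Y Yd -> 0 <= inner Yd (Smat A C Y H *m Yd)).

Definition convexP (R : realType) (n : nat) (F : 'M[R]_n -> Prop) : Prop :=
  forall P Q (t : R), F P -> F Q -> 0 <= t -> t <= 1 -> F ((1 - t) *: P + t *: Q).

Definition is_face (R : realType) (n : nat) (K F : 'M[R]_n -> Prop) : Prop :=
  (forall X, F X -> K X) /\ convexP F /\
  (forall P Q : 'M[R]_n,
     (forall s : R, 0 <= s -> s <= 1 -> K ((1 - s) *: P + s *: Q)) ->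
     (exists2 t : R, 0 < t < 1 & F ((1 - t) *: P + t *: Q)) ->
     F P /\ F Q).

Definition diffs (R : realType) (n : nat) (X0 : 'M[R]_n) (s : seq 'M[R]_n)
  : seq 'M[R]_n := [seq W - X0 | W <- s].

Definition in_aff (R : realType) (n : nat) (F : 'M[R]_n -> Prop) (Z : 'M[R]_n) : Prop :=
  exists (X0 : 'M[R]_n) (s : seq 'M[R]_n),
    F X0 /\ (forall W, W \in s -> F W) /\
    (Z - X0) \in (<< diffs X0 s >>)%VS.

Definition relint (R : realType) (n : nat) (F : 'M[R]_n -> Prop) (X : 'M[R]_n) : Prop :=
  F X /\ exists2 eps : R, 0 < eps &
    forall Z, in_aff F Z -> frob2 (Z - X) < eps -> F Z.

Definition affdim (R : realType) (n : nat) (F : 'M[R]_n -> Prop) (d : nat) : Prop :=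
  (exists (X0 : 'M[R]_n) (s : seq 'M[R]_n),
     F X0 /\ (forall W, W \in s -> F W) /\
     \dim (<< diffs X0 s >>)%VS = d) /\
  (forall (X0 : 'M[R]_n) (s : seq 'M[R]_n),
     F X0 -> (forall W, W \in s -> F W) ->
     (\dim (<< diffs X0 s >>)%VS <= d)%N).

From HB Require Import structures.
From mathcomp Require Import all_boot all_order all_algebra.
From mathcomp Require Import reals boolp.
From mathcomp Require Import ring lra zify.
Set Implicit Arguments. Unset Strict Implicit. Unset Printing Implicit Defensive.
Import Order.TTheory GRing.Theory Num.Theory.
Local Open Scope ring_scope.

(* The matrix S = S(Y) is symmetric, satisfies S Y = 0, and C = S + A^*(mu).  It
   is therefore a dual certificate: for feasible X, <C, X> - <C, Y Y^T> = <S, X>,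
   which is >= 0 as soon as S is positive semidefinite; optimality of Y Y^T for
   (SDP) then gives optimality of Y for (P).
   Second-order criticality along a tangent direction Y K + v r with r <> 0
   gives (v^T S v) |r|^2 >= 0.  If rank Y < p, take K = 0 and r <> 0 with
   r Y^T = 0.  If rank Y = p and v is not in the range of Y, count dimensions:
   Y Sym + v R^p has dimension p(p+1)/2 + p and tangency costs at most m' of
   them, whereas tangent directions inside Y Sym yield feasible directions
   Y K Y^T of the face F = {Y M Y^T feasible}, of which there are at most dim F;
   the hypothesis on dim F leaves room for a tangent direction with r <> 0. *)

Section InnerProduct.
Variable R : realType.
Implicit Types k l : nat.

Lemma innerE k l (U V : 'M[R]_(k, l)) : inner U V = \sum_i \sum_j U i j * V i j.
Proof.
rewrite /inner /mxtrace exchange_big; apply: eq_bigr => j _.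
by rewrite mxE; apply: eq_bigr => i _; rewrite !mxE.
Qed.

Lemma innerC k l (U V : 'M[R]_(k, l)) : inner U V = inner V U.
Proof. by rewrite !innerE; apply: eq_bigr => i _; apply: eq_bigr => j _; rewrite mulrC. Qed.

Lemma innerDr k l (U V W : 'M[R]_(k, l)) : inner U (V + W) = inner U V + inner U W.
Proof. by rewrite /inner mulmxDr mxtraceD. Qed.

Lemma innerZr k l (U V : 'M[R]_(k, l)) a : inner U (a *: V) = a * inner U V.
Proof. by rewrite /inner -scalemxAr mxtraceZ. Qed.

Lemma innerNr k l (U V : 'M[R]_(k, l)) : inner U (- V) = - inner U V.
Proof. by rewrite -scaleN1r innerZr mulN1r. Qed.

Lemma innerBr k l (U V W : 'M[R]_(k, l)) : inner U (V - W) = inner U V - inner U W.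
Proof. by rewrite innerDr innerNr. Qed.

Lemma inner0r k l (U : 'M[R]_(k, l)) : inner U 0 = 0.
Proof. by rewrite /inner mulmx0 mxtrace0. Qed.

Lemma inner_sumr k l (I : finType) (U : 'M[R]_(k, l)) (F : I -> 'M[R]_(k, l)) :
  inner U (\sum_i F i) = \sum_i inner U (F i).
Proof. by elim/big_rec2: _ => [|i x y _ <-]; rewrite ?inner0r ?innerDr. Qed.

Lemma innerDl k l (U V W : 'M[R]_(k, l)) : inner (V + W) U = inner V U + inner W U.
Proof. by rewrite innerC innerDr !(innerC U). Qed.

Lemma innerZl k l (U V : 'M[R]_(k, l)) a : inner (a *: V) U = a * inner V U.
Proof. by rewrite innerC innerZr innerC. Qed.

Lemma inner0l k l (U : 'M[R]_(k, l)) : inner 0 U = 0.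
Proof. by rewrite innerC inner0r. Qed.

Lemma inner_self_ge0 k l (U : 'M[R]_(k, l)) : 0 <= inner U U.
Proof. by rewrite innerE; do 2!(apply: sumr_ge0 => ? _); rewrite -expr2 sqr_ge0. Qed.

Lemma inner_self_eq0 k l (U : 'M[R]_(k, l)) : inner U U = 0 -> U = 0.
Proof.
have sq_ge0 (x : R) : 0 <= x * x by rewrite -expr2 sqr_ge0.
rewrite innerE => /eqP; rewrite psumr_eq0 => [/allP U0|i _]; last exact: sumr_ge0.
apply/matrixP => i j; have /implyP/(_ isT) := U0 i (mem_index_enum _).
rewrite psumr_eq0 // => /allP/(_ j (mem_index_enum _)).
by rewrite mxE mulf_eq0 orbb => /eqP.
Qed.

Lemma inner_mulmxl k l q (U : 'M[R]_(k, l)) (X : 'M[R]_(k, q)) (V : 'M[R]_(q, l)) :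
  inner U (X *m V) = inner (X^T *m U) V.
Proof. by rewrite /inner trmx_mul trmxK mulmxA. Qed.

Lemma inner_mulmxr k l q (U : 'M[R]_(k, l)) (V : 'M[R]_(k, q)) (X : 'M[R]_(q, l)) :
  inner U (V *m X) = inner (U *m X^T) V.
Proof. by rewrite /inner mulmxA mxtrace_mulC mulmxA trmx_mul trmxK. Qed.

Lemma inner_trmx k l (U V : 'M[R]_(k, l)) : inner U^T V^T = inner U V.
Proof. by rewrite /inner trmxK -mxtrace_tr trmx_mul trmxK mxtrace_mulC. Qed.

Lemma inner_col k (x v : 'cV[R]_k) : inner x v = (x^T *m v) 0 0.
Proof. exact: trace_mx11. Qed.

Lemma inner_delta k (i : 'I_k) (v : 'cV[R]_k) : inner (delta_mx i 0) v = v i 0.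
Proof. by rewrite inner_col trmx_delta -rowE mxE. Qed.

Lemma inner_mulmx_row k l (v w : 'cV[R]_k) (r : 'rV[R]_l) :
  inner (v *m r) (w *m r) = inner v w * inner r^T r^T.
Proof.
rewrite inner_mulmxr -mulmxA [r *m r^T]mx11_scalar mul_mx_scalar innerZl mulrC.
by rewrite [inner r^T _]inner_col trmxK.
Qed.

Lemma quadratic_ge0_discriminant (a b c : R) :
  0 <= c -> (forall s, 0 <= a + 2 * s * b + s ^+ 2 * c) -> b ^+ 2 <= a * c.
Proof.
move=> c_ge0 q_ge0; have [c0|c_neq0] := eqVneq c 0.
  rewrite c0 in q_ge0 *.
  have [->|b_neq0] := eqVneq b 0; first by rewrite expr0n mulr0.
  have := q_ge0 (- (a + 1) / (2 * b)).
  have -> : 2 * (- (a + 1) / (2 * b)) * b = - (a + 1) by field; rewrite b_neq0.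
  rewrite mulr0 addr0; lra.
have c_gt0 : 0 < c by rewrite lt_def c_neq0.
have := q_ge0 (- b / c).
have -> : a + 2 * (- b / c) * b + (- b / c) ^+ 2 * c = a - b ^+ 2 / c by field.
by rewrite subr_ge0 ler_pdivrMr.
Qed.

Lemma inner_cauchy_schwarz k l (U V : 'M[R]_(k, l)) :
  inner U V ^+ 2 <= inner U U * inner V V.
Proof.
apply: quadratic_ge0_discriminant; first exact: inner_self_ge0.
move=> s; have := inner_self_ge0 (U + s *: V).
rewrite !innerDl !innerDr !innerZl !innerZr (innerC V U); lra.
Qed.

End InnerProduct.

Section PositiveSemidefinite.
Variable R : realType.
Implicit Types k : nat.

Lemma qformE k (X : 'M[R]_k) (v : 'cV[R]_k) : (v^T *m X *m v) 0 0 = inner v (X *m v).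
Proof. by rewrite inner_col mulmxA. Qed.

Lemma psd_qform_ge0 k (X : 'M[R]_k) (v : 'cV[R]_k) : psd X -> 0 <= inner v (X *m v).
Proof. by move=> pX; rewrite -qformE. Qed.

Lemma psd_diag_ge0 k (X : 'M[R]_k) j : psd X -> 0 <= X j j.
Proof. by move/(psd_qform_ge0 (delta_mx j 0)); rewrite -colE inner_delta mxE. Qed.

Lemma symm_inner_mulmx k (X : 'M[R]_k) (v w : 'cV[R]_k) :
  symm X -> inner v (X *m w) = inner w (X *m v).
Proof. by move=> sX; rewrite inner_mulmxl sX innerC. Qed.

Lemma psd_cauchy_schwarz k (X : 'M[R]_k) (v w : 'cV[R]_k) : symm X -> psd X ->
  inner w (X *m v) ^+ 2 <= inner w (X *m w) * inner v (X *m v).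
Proof.
move=> sX pX; apply: quadratic_ge0_discriminant; first exact: psd_qform_ge0.
move=> s; have := psd_qform_ge0 (w + s *: v) pX.
rewrite mulmxDr -scalemxAr !innerDl !innerDr !innerZl !innerZr.
rewrite (symm_inner_mulmx v w sX); lra.
Qed.

Lemma psd_qform_eq0 k (X : 'M[R]_k) (v : 'cV[R]_k) : symm X -> psd X ->
  inner v (X *m v) = 0 -> X *m v = 0.
Proof.
move=> sX pX v0; apply: inner_self_eq0; apply/eqP; rewrite -sqrf_eq0 eq_le sqr_ge0 andbT.
by have := psd_cauchy_schwarz v (X *m v) sX pX; rewrite v0 mulr0.
Qed.

Lemma psd_diag_eq0 k (X : 'M[R]_k) : symm X -> psd X -> (forall j, X j j = 0) -> X = 0.
Proof.
move=> sX pX X0; apply/matrixP => i j.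
have Xj0 : X *m delta_mx j (0 : 'I_1) = 0.
  by apply: psd_qform_eq0; rewrite // -colE inner_delta mxE X0.
by have := congr1 (fun M : 'cV[R]_k => M i 0) Xj0; rewrite -colE !mxE.
Qed.

Definition diag_supp k (X : 'M[R]_k) := [set j | X j j != 0].

Lemma psd_schur_step k (X : 'M[R]_k) j : symm X -> psd X -> X j j != 0 ->
  let X' := X - (X j j)^-1 *: (col j X *m (col j X)^T) in
  [/\ symm X', psd X' & diag_supp X' \proper diag_supp X].
Proof.
move=> sX pX; set a := X j j; set x := col j X => a_neq0 X'.
have a_gt0 : 0 < a by rewrite lt_def a_neq0 psd_diag_ge0.
have X'E i l : X' i l = X i l - a^-1 * (X i j * X l j).
  by rewrite !mxE big_ord1 !mxE.
split.
- by rewrite /symm /X' linearB linearZ /= trmx_mul trmxK sX.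
- move=> v; rewrite qformE mulmxBl -scalemxAl innerBr innerZr -mulmxA.
  rewrite [inner v (x *m _)]inner_mulmxl.
  have -> : inner (x^T *m v) (x^T *m v) = inner (delta_mx j 0) (X *m v) ^+ 2.
    by rewrite innerE !big_ord1 -inner_col -expr2 /x colE innerC symm_inner_mulmx.
  have Xjj : inner (delta_mx j 0) (X *m delta_mx j (0 : 'I_1)) = a.
    by rewrite -colE inner_delta mxE.
  have := psd_cauchy_schwarz v (delta_mx j 0) sX pX; rewrite Xjj.
  by rewrite subr_ge0 -(ler_pM2l a_gt0) mulrA mulfV // mul1r.
- apply/properP; split.
    apply/subsetP => i; rewrite !inE X'E; apply: contraNneq => Xii0.
    have Xi0 : X *m delta_mx i (0 : 'I_1) = 0.
      by apply: psd_qform_eq0; rewrite // -colE inner_delta mxE.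
    have := congr1 (fun M : 'cV[R]_k => M j 0) Xi0; rewrite -colE !mxE => Xji0.
    have Xij0 : X i j = 0 by rewrite -{1}sX mxE.
    by rewrite Xii0 Xij0 mul0r mulr0 subr0.
  exists j; first by rewrite inE.
  by rewrite inE X'E -/a negbK mulrA mulVf // mul1r subrr.
Qed.

Lemma psd_rank1_decomposition k (X : 'M[R]_k) : symm X -> psd X ->
  exists s : seq 'cV[R]_k, X = \sum_(x <- s) x *m x^T.
Proof.
have [N] := ubnP #|diag_supp X|; elim: N X => // N IHN X ltN sX pX.
have [j /= Xjj|X0] := pickP [pred j | X j j != 0]; last first.
  by exists [::]; rewrite big_nil; apply: psd_diag_eq0 => // j; apply/eqP/negbFE/X0.
have [sX' pX' ltX'] := psd_schur_step sX pX Xjj.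
have [s Xs] := IHN _ (leq_trans (proper_card ltX') ltN) sX' pX'.
have a_ge0 : 0 <= (X j j)^-1 by rewrite invr_ge0 psd_diag_ge0.
exists (Num.sqrt (X j j)^-1 *: col j X :: s).
rewrite big_cons -Xs linearZ /= -scalemxAl -scalemxAr scalerA -expr2 sqr_sqrtr //.
by rewrite addrC subrK.
Qed.

Lemma mxtrace_mul_psd_ge0 k (S X : 'M[R]_k) : psd S -> symm X -> psd X -> 0 <= \tr (S *m X).
Proof.
move=> pS sX pX; have [s ->] := psd_rank1_decomposition sX pX.
rewrite mulmx_sumr linear_sum /=; apply: sumr_ge0 => x _.
by rewrite mulmxA mxtrace_mulC mulmxA trace_mx11; exact: pS.
Qed.

Lemma inner_rank1 k (v : 'cV[R]_k) : inner (v *m v^T) (v *m v^T) = inner v v ^+ 2.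
Proof.
rewrite inner_mulmxl mulmxA [v^T *m v]mx11_scalar -inner_col mul_scalar_mx.
by rewrite innerZl inner_trmx expr2.
Qed.

Lemma qform_sqr_le_frob2 k (E : 'M[R]_k) (v : 'cV[R]_k) :
  inner v (E *m v) ^+ 2 <= frob2 E * inner v v ^+ 2.
Proof. by rewrite inner_mulmxr innerC -inner_rank1; exact: inner_cauchy_schwarz. Qed.

Lemma psd_add_small k (E : 'M[R]_k) (e : R) : e < 1 ->
  (forall v : 'cV[R]_k, inner v (E *m v) ^+ 2 <= e * inner v v ^+ 2) -> psd (1%:M + E).
Proof.
move=> e_lt1 Ev v; rewrite qformE mulmxDl mul1mx innerDr.
by have := Ev v; have := inner_self_ge0 v; nra.
Qed.

Lemma psd_conj k l (Y : 'M[R]_(k, l)) (M : 'M[R]_l) : psd M -> psd (Y *m M *m Y^T).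
Proof. by move=> pM v; rewrite qformE -!mulmxA inner_mulmxl -qformE. Qed.

Lemma symm_conj k l (Y : 'M[R]_(k, l)) (M : 'M[R]_l) : symm M -> symm (Y *m M *m Y^T).
Proof. by move=> sM; rewrite /symm !trmx_mul trmxK sM mulmxA. Qed.

End PositiveSemidefinite.

Section Constraints.
Variables (R : realType) (n m : nat) (A : 'I_m -> 'M[R]_n).

Fact Aop_is_linear : linear (Aop A).
Proof. by move=> a X Z; apply/matrixP => i j; rewrite !mxE innerDr innerZr. Qed.
HB.instance Definition _ :=
  GRing.isLinear.Build R _ _ _ (Aop A) Aop_is_linear.

Lemma inner_Aadj (nu : 'cV[R]_m) (X : 'M[R]_n) : inner (Aadj A nu) X = inner nu (Aop A X).
Proof.
rewrite /Aadj innerC inner_sumr inner_col mxE; apply: eq_bigr => i _.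
by rewrite innerZr innerC !mxE.
Qed.

Lemma symm_Aadj (nu : 'cV[R]_m) : (forall i, symm (A i)) -> symm (Aadj A nu).
Proof.
move=> symA; rewrite /symm /Aadj linear_sum; apply: eq_bigr => i _.
by rewrite linearZ /= symA.
Qed.

Lemma gobjE p (C : 'M[R]_n) (Y : 'M[R]_(n, p)) : gobj C Y = inner C (Y *m Y^T).
Proof. by rewrite /gobj inner_mulmxr trmxK. Qed.

Lemma feasC_gram p (b : 'cV[R]_m) (Y : 'M[R]_(n, p)) : Mp A b Y -> feasC A b (Y *m Y^T).
Proof.
move=> hY; split; first by rewrite /symm trmx_mul trmxK.
by split=> // v; rewrite qformE -mulmxA inner_mulmxl inner_self_ge0.
Qed.

Lemma feasC_optimal_of_certificate (b : 'cV[R]_m) (C S : 'M[R]_n) (nu : 'cV[R]_m)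
    (X0 : 'M[R]_n) :
  C = S + Aadj A nu -> symm S -> psd S -> feasC A b X0 -> inner S X0 = 0 ->
  forall X, feasC A b X -> inner C X0 <= inner C X.
Proof.
move=> -> sS pS [_ [AX0 _]] SX0 X [sX [AX pX]].
rewrite !innerDl !inner_Aadj AX0 AX SX0 add0r lerDr /inner sS.
exact: mxtrace_mul_psd_ge0.
Qed.

End Constraints.

Section AffineHull.
Variables (R : realType) (n : nat) (F : 'M[R]_n -> Prop).

Lemma in_aff_lfun (vT : vectType R) (f : 'Hom('M[R]_n, vT)) c :
  (forall X, F X -> f X = c) -> forall Z, in_aff F Z -> f Z = c.
Proof.
move=> Fc Z [X0 [s [FX0 [Fs ZX0]]]].
have : (<<diffs X0 s>> <= lker f)%VS.
  by apply/span_subvP => _ /mapP[W /Fs FW ->]; rewrite memv_ker linearB /= !Fc ?subrr.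
move/subvP/(_ _ ZX0); rewrite memv_ker linearB /= (Fc X0 FX0) subr_eq0.
by move/eqP.
Qed.

Lemma affdim_exists X : F X -> exists d, affdim F d.
Proof.
move=> FX.
pose P k :=
  `[< exists X0 s, F X0 /\ (forall W, W \in s -> F W) /\ \dim <<diffs X0 s>> = k >].
have P0 : exists k, P k.
  by exists 0%N; apply/asboolP; exists X, [::]; rewrite span_nil dimv0.
have Pub k : P k -> (k <= n * n)%N.
  move/asboolP=> [X0 [s [_ [_ <-]]]].
  by apply: (leq_trans (dimvS (subvf _))); rewrite dimvf dim_matrix.
have [d /asboolP[X0 [s [FX0 [Fs ds]]]] dmax] := ex_maxnP P0 Pub.
exists d; split; first by exists X0, s.
by move=> X1 s1 FX1 Fs1; apply/dmax/asboolP; exists X1, s1.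
Qed.

End AffineHull.

Section RangeFace.
Variables (R : realType) (n m p : nat) (A : 'I_m -> 'M[R]_n) (b : 'cV[R]_m).
Variables (Y : 'M[R]_(n, p)) (L : 'M[R]_(p, n)).
Hypotheses (LY1 : L *m Y = 1%:M) (hY : Mp A b Y).

Definition faceYY (X : 'M[R]_n) : Prop := feasC A b X /\ exists M, X = Y *m M *m Y^T.

Lemma trLY1 : Y^T *m L^T = 1%:M.
Proof. by rewrite -trmx_mul LY1 trmx1. Qed.

Lemma conj_rangeK (M : 'M[R]_p) : L *m (Y *m M *m Y^T) *m L^T = M.
Proof. by rewrite !mulmxA LY1 mul1mx -(mulmxA M) trLY1 mulmx1. Qed.

Lemma faceYY_gram : faceYY (Y *m Y^T).
Proof. by split; [exact: feasC_gram | exists 1%:M; rewrite mulmx1]. Qed.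

Lemma psd_summand_in_range (P Q : 'M[R]_n) (M : 'M[R]_p) (c1 c2 : R) :
  symm P -> psd P -> psd Q -> 0 < c1 -> 0 < c2 -> c1 *: P + c2 *: Q = Y *m M *m Y^T ->
  P = Y *m (L *m P *m L^T) *m Y^T.
Proof.
move=> sP pP pQ c1_gt0 c2_gt0 PQ.
set N := 1%:M - Y *m L.
have NY : N *m Y = 0 by rewrite mulmxBl mul1mx -mulmxA LY1 mulmx1 subrr.
(* [Y^T] kills [(u N)^T], so the quadratic form of [c1 P + c2 Q] vanishes there *)
have NP (u : 'rV[R]_n) : u *m N *m P = 0.
  set w := (u *m N)^T.
  suff /(congr1 trmx) : P *m w = 0 by rewrite trmx_mul sP trmxK trmx0.
  apply: psd_qform_eq0 => //.
  have : inner w ((c1 *: P + c2 *: Q) *m w) = 0.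
    by rewrite PQ -!mulmxA /w -trmx_mul -mulmxA NY mulmx0 trmx0 !mulmx0 inner0r.
  rewrite mulmxDl -!scalemxAl innerDr !innerZr.
  by have := psd_qform_ge0 w pP; have := psd_qform_ge0 w pQ; nra.
have NP0 : N *m P = 0 by apply/eqP/mulmxP => u; rewrite mulmxA NP mulmx0.
have PE : P = Y *m L *m P by move/eqP: NP0; rewrite mulmxBl mul1mx subr_eq0 => /eqP.
have PE' : P = P *m (Y *m L)^T by rewrite -{1}sP {1}PE trmx_mul; congr (_ *m _).
by rewrite {1}PE {1}PE' trmx_mul !mulmxA.
Qed.

Lemma faceYY_convex : convexP faceYY.
Proof.
move=> P Q t [[sP [AP pP]] [MP EP]] [[sQ [AQ pQ]] [MQ EQ]] t_ge0 t_le1.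
split; last first.
  exists ((1 - t) *: MP + t *: MQ).
  by rewrite mulmxDr mulmxDl -!scalemxAr -!scalemxAl -EP -EQ.
split; first by rewrite /symm linearD !linearZ /= sP sQ.
split; first by rewrite linearD !linearZ /= AP AQ -scalerDl subrK scale1r.
move=> v; rewrite qformE mulmxDl -!scalemxAl innerDr !innerZr.
have := psd_qform_ge0 v pP; have := psd_qform_ge0 v pQ; nra.
Qed.

Lemma faceYY_is_face : is_face (feasC A b) faceYY.
Proof.
split; first by move=> X [].
split; first exact: faceYY_convex.
move=> P Q PQ [t /andP[t_gt0 t_lt1] [_ [M EM]]].
have KP : feasC A b P.
  by have := PQ 0 (lexx _) ler01; rewrite subr0 scale1r scale0r addr0.
have KQ : feasC A b Q.
  by have := PQ 1 ler01 (lexx _); rewrite subrr scale0r add0r scale1r.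
have [[sP [_ pP]] [sQ [_ pQ]]] := (KP, KQ).
have t'_gt0 : 0 < 1 - t by rewrite subr_gt0.
split; split=> //.
  by exists (L *m P *m L^T); exact: psd_summand_in_range sP pP pQ t'_gt0 t_gt0 EM.
rewrite addrC in EM.
by exists (L *m Q *m L^T); exact: psd_summand_in_range sQ pQ pP t_gt0 t'_gt0 EM.
Qed.

Definition range_proj (D : 'M[R]_n) : 'M[R]_n := Y *m (L *m D *m L^T) *m Y^T.

Fact range_proj_is_linear : linear range_proj.
Proof.
move=> a D1 D2; rewrite /range_proj mulmxDr mulmxDl mulmxDr mulmxDl.
by rewrite -!scalemxAr -!scalemxAl -!scalemxAr -!scalemxAl.
Qed.
HB.instance Definition _ :=
  GRing.isLinear.Build R _ _ _ range_proj range_proj_is_linear.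

Lemma faceYY_range_proj X : faceYY X -> range_proj X = X.
Proof. by case=> _ [M ->]; rewrite /range_proj conj_rangeK. Qed.

Lemma in_aff_faceYY Z : in_aff faceYY Z -> [/\ symm Z, Aop A Z = b & range_proj Z = Z].
Proof.
move=> affZ; split.
- apply/eqP; rewrite -subr_eq0; apply/eqP.
  have := in_aff_lfun (f := linfun trmx - \1%VF) _ affZ.
  rewrite add_lfunE opp_lfunE id_lfunE lfunE.
  by apply=> X [[sX _] _]; rewrite add_lfunE opp_lfunE id_lfunE lfunE /= sX subrr.
- have := in_aff_lfun (f := linfun (Aop A)) _ affZ; rewrite lfunE.
  by apply=> X [[_ [AX _]] _]; rewrite lfunE.
- apply/eqP; rewrite -subr_eq0; apply/eqP.
  have := in_aff_lfun (f := linfun range_proj - \1%VF) _ affZ.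
  rewrite add_lfunE opp_lfunE id_lfunE lfunE.
  by apply=> X FX; rewrite add_lfunE opp_lfunE id_lfunE lfunE /= faceYY_range_proj ?subrr.
Qed.

Lemma conj_range_gram : L *m (Y *m Y^T) *m L^T = 1%:M.
Proof. by have := conj_rangeK 1%:M; rewrite mulmx1. Qed.

Lemma relint_faceYY_gram : relint faceYY (Y *m Y^T).
Proof.
split; first exact: faceYY_gram.
set g := frob2 (L *m L^T); have g_ge0 : 0 <= g := inner_self_ge0 _.
have g1_gt0 : 0 < g + 1 by lra.
exists (g + 1)^-1; first by rewrite invr_gt0.
move=> Z affZ; set D := Z - Y *m Y^T => D_small.
have [sZ AZ PZ] := in_aff_faceYY affZ.
have fg_lt1 : frob2 D * g < 1.
  have : (g + 1)^-1 * (g + 1) = 1 by rewrite mulVf // lt0r_neq0.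
  by have := inner_self_ge0 D; rewrite -/(frob2 D); nra.
split; last by exists (L *m Z *m L^T); rewrite -{1}PZ.
do 2!split=> //; rewrite -PZ; apply: psd_conj.
have -> : L *m Z *m L^T = 1%:M + L *m D *m L^T.
  by rewrite /D mulmxBr mulmxBl conj_range_gram addrC subrK.
apply: (psd_add_small (e := frob2 D * g)) => // v.
rewrite -!mulmxA inner_mulmxl; set w := L^T *m v.
have := qform_sqr_le_frob2 (L *m L^T) v; rewrite -mulmxA inner_mulmxl -/w -/g => wv.
apply: (le_trans (qform_sqr_le_frob2 D w)); rewrite -mulrA.
by apply: ler_wpM2l; [exact: inner_self_ge0 | exact: wv].
Qed.

Lemma faceYY_perturb (K : 'M[R]_p) : symm K -> Aop A (Y *m K *m Y^T) = 0 ->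
  faceYY (Y *m Y^T + (frob2 K + 1)^-1 *: (Y *m K *m Y^T)).
Proof.
move=> sK AK; set f := frob2 K; set e := (f + 1)^-1.
have E : Y *m Y^T + e *: (Y *m K *m Y^T) = Y *m (1%:M + e *: K) *m Y^T.
  by rewrite mulmxDr mulmx1 mulmxDl -scalemxAr -scalemxAl.
split; last by exists (1%:M + e *: K).
split; first by rewrite E; apply: symm_conj; rewrite /symm linearD linearZ /= trmx1 sK.
split; first by rewrite linearD linearZ /= hY AK scaler0 addr0.
rewrite E; apply/psd_conj/(psd_add_small (e := e ^+ 2 * f)) => [|v].
  have f_ge0 : 0 <= f := inner_self_ge0 _.
  have e_gt0 : 0 < e by rewrite invr_gt0; lra.
  have : e * (f + 1) = 1 by rewrite mulVf // lt0r_neq0 //; lra.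
  nra.
rewrite -scalemxAl innerZr exprMn -[leRHS]mulrA; apply: ler_wpM2l; first exact: sqr_ge0.
exact: qform_sqr_le_frob2.
Qed.

Lemma faceYY_dim_ge (Q : {vspace 'M[R]_(n, p)}) :
    (forall q, q \in Q -> exists2 K, symm K & q = Y *m K) ->
    (forall q, q \in Q -> Aop A (q *m Y^T) = 0) ->
  exists X0 s, [/\ faceYY X0, forall W, W \in s -> faceYY W
                 & (\dim Q <= \dim <<diffs X0 s>>)%N].
Proof.
move=> QK QA; pose e (q : 'M[R]_(n, p)) := (frob2 (L *m q) + 1)^-1.
have e_neq0 q : e q != 0.
  by rewrite invr_eq0 lt0r_neq0 //; have := inner_self_ge0 (L *m q); rewrite /frob2; lra.
set B := vbasis Q.
exists (Y *m Y^T), [seq Y *m Y^T + e q *: (q *m Y^T) | q <- B]; split.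
- exact: faceYY_gram.
- move=> _ /mapP[q /vbasis_mem Qq ->]; have [K sK qE] := QK q Qq.
  have AK := QA q Qq; rewrite qE in AK.
  rewrite /e qE mulmxA LY1 mul1mx; exact: faceYY_perturb.
have -> : diffs (Y *m Y^T) [seq Y *m Y^T + e q *: (q *m Y^T) | q <- B] =
          [seq e q *: (q *m Y^T) | q <- B].
  by rewrite /diffs -map_comp; apply: eq_map => q /=; rewrite addrC addKr.
have inj : (Q :&: lker (linfun (mulmxr Y^T)))%VS = 0%VS.
  apply/eqP; rewrite -subv0; apply/subvP => q /memv_capP[Qq].
  rewrite memv_ker lfunE /= memv0 => /eqP qY0; have [K _ qE] := QK q Qq.
  by apply/eqP; rewrite qE -(conj_rangeK K) -qE qY0 mulmx0 mul0mx mulmx0.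
apply: (@leq_trans (\dim (linfun (mulmxr Y^T) @: Q))); first by rewrite limg_dim_eq.
have -> : (linfun (mulmxr Y^T) @: Q = <<map (linfun (mulmxr Y^T)) B>>)%VS.
  by rewrite -limg_span (span_basis (vbasisP Q)).
apply/dimvS/span_subvP => _ /mapP[q qB ->].
rewrite lfunE /= -[q *m Y^T](scalerK (e_neq0 q)) memvZ // memv_span //.
by apply/mapP; exists q.
Qed.

End RangeFace.

Lemma dimv_le_cap_lker (K : fieldType) (aT rT : vectType K) (f : 'Hom(aT, rT))
    (V : {vspace aT}) :
  (\dim V <= \dim (V :&: lker f) + \dim (limg f))%N.
Proof. by rewrite -{1}(limg_ker_dim f V) leq_add2l dimvS // limgS ?subvf. Qed.

Section Symmetrize.
Variables (R : realType) (p : nat).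

Definition symmetrize (M : 'M[R]_p) : 'M[R]_p := M + M^T.

Fact symmetrize_is_linear : linear symmetrize.
Proof. by move=> a M N; rewrite /symmetrize linearD linearZ /= scalerDr addrACA. Qed.
HB.instance Definition _ :=
  GRing.isLinear.Build R _ _ _ symmetrize symmetrize_is_linear.

Lemma symm_in_limg_symmetrize (Z : 'M[R]_p) : symm Z -> Z \in limg (linfun symmetrize).
Proof.
move=> sZ; have -> : Z = linfun symmetrize (2^-1 *: Z).
  rewrite lfunE /= /symmetrize [(_ *: Z)^T]linearZ /= sZ -scalerDl.
  by rewrite (_ : (2^-1 + 2^-1 : R) = 1) ?scale1r //; lra.
exact: memv_img (memvf _).
Qed.

Definition mirror_upper (K : 'M[R]_p) : 'M[R]_p :=
  \matrix_(i, j) if (i < j)%N then K i j else if (j < i)%N then K j i else 0.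

Fact mirror_upper_is_linear : linear mirror_upper.
Proof.
move=> a K N; apply/matrixP => i j; rewrite !mxE.
by case: ifP => _; rewrite ?mxE //; case: ifP => _; rewrite ?mxE ?mulr0 ?addr0.
Qed.
HB.instance Definition _ :=
  GRing.isLinear.Build R _ _ _ mirror_upper mirror_upper_is_linear.

Lemma mirror_upper_skew_inj :
  (lker (linfun symmetrize) :&: lker (linfun mirror_upper) = 0)%VS.
Proof.
apply/eqP; rewrite -subv0; apply/subvP => K /memv_capP[].
rewrite !memv_ker !lfunE /= memv0 => /eqP skewK /eqP upK; apply/eqP/matrixP => i j.
have Ksk i' j' : K i' j' + K j' i' = 0.
  by have := congr1 (fun M : 'M[R]_p => M i' j') skewK; rewrite !mxE.
have Kup (i' j' : 'I_p) : (i' < j')%N -> K i' j' = 0.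
  by move=> lt_ij; have := congr1 (fun M : 'M[R]_p => M i' j') upK; rewrite !mxE lt_ij.
rewrite mxE; case: (ltngtP i j) => [/Kup //|lt_ji|eij].
  by have := Ksk i j; rewrite (Kup j i lt_ji) addr0.
have := Ksk i j; rewrite (val_inj eij) -mulr2n -mulr_natr => /eqP.
by rewrite mulf_eq0 pnatr_eq0 orbF => /eqP.
Qed.

Lemma dim_limg_diag_mx : \dim (limg (linfun (@diag_mx R p))) = p.
Proof.
rewrite limg_dim_eq ?dimvf ?dim_matrix; first exact: mul1n.
apply/eqP; rewrite -subv0; apply/subvP => d /memv_capP[_].
rewrite memv_ker lfunE memv0 => /eqP d0; apply/eqP/matrixP => i j.
by have := congr1 (fun M : 'M[R]_p => M j j) d0; rewrite (ord1 i) !mxE eqxx mulr1n.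
Qed.

(* [mirror_upper] embeds the skew matrices into the zero-diagonal symmetric ones,
   the diagonal matrices complete them inside Sym, and rank-nullity for
   [symmetrize] gives 2 dim Sym >= p^2 + p. *)
Lemma dim_limg_symmetrize : ((p * (p + 1)) %/ 2 <= \dim (limg (linfun symmetrize)))%N.
Proof.
set Sk := lker (linfun symmetrize).
have rank_nullity := limg_ker_dim (linfun symmetrize) fullv.
rewrite capfv dimvf dim_matrix -/Sk in rank_nullity.
set V1 := (linfun mirror_upper @: Sk)%VS; set V2 := limg (linfun (@diag_mx R p)).
have V12_sym : (V1 + V2 <= limg (linfun symmetrize))%VS.
  rewrite subv_add; apply/andP; split; apply/subvP => _ /memv_imgP[K _ ->];
    apply: symm_in_limg_symmetrize; rewrite lfunE /symm /=; last exact: tr_diag_mx.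
  apply/matrixP => i j; rewrite !mxE.
  by case: (ltngtP i j) => // eij; congr (K _ _); apply: val_inj.
have V12_disj : (V1 :&: V2 = 0)%VS.
  apply/eqP; rewrite -subv0; apply/subvP => _ /memv_capP[/memv_imgP[K _ ->]].
  move=> /memv_imgP[d _]; rewrite !lfunE /= memv0 => e; apply/eqP/matrixP => i j.
  have [<-|nij] := eqVneq i j; first by rewrite !mxE ltnn.
  by rewrite e !mxE (negbTE nij) mulr0n.
have := dimvS V12_sym.
rewrite dimv_disjoint_sum // (limg_dim_eq mirror_upper_skew_inj) dim_limg_diag_mx.
move: rank_nullity; move: (\dim Sk) (\dim (limg _)) => s d sd sd'.
have : (p * (p + 1) <= d * 2)%N by rewrite mulnDr muln1; lia.
by move/(leq_div2r 2); rewrite mulnK.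
Qed.

End Symmetrize.

Section TangentDirection.
Variables (R : realType) (n m p m' : nat) (A : 'I_m -> 'M[R]_n) (b : 'cV[R]_m).
Variables (Y : 'M[R]_(n, p)) (L : 'M[R]_(p, n)) (u : 'cV[R]_n).
Hypotheses (LY1 : L *m Y = 1%:M) (hY : Mp A b Y) (u_notin : ~~ (u^T <= Y^T)%MS).
Hypothesis dim_span : \dim (AYspan A Y) = m'.
Hypothesis face_dim : forall (F : 'M[R]_n -> Prop) (d : nat),
  is_face (feasC A b) F -> relint F (Y *m Y^T) -> affdim F d ->
  (d + m' < (p * (p + 1)) %/ 2 + p)%N.

Let W := AYspan A Y.

(* Pairing with a basis of [W] rather than with the [A_i Y] themselves keeps the
   kernel inside [T_Y] while the image lies in a space of dimension [m']. *)
Definition span_coords (Yd : 'M[R]_(n, p)) : 'rV[R]_(\dim W) :=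
  \row_k inner (tnth (vbasis W) k) Yd.

Fact span_coords_is_linear : linear span_coords.
Proof. by move=> a X Z; apply/matrixP => i j; rewrite !mxE innerDr innerZr. Qed.
HB.instance Definition _ :=
  GRing.isLinear.Build R _ _ _ span_coords span_coords_is_linear.

Lemma lker_span_coords_tangent Yd : Yd \in lker (linfun span_coords) -> TY A Y Yd.
Proof.
rewrite memv_ker lfunE /= => /eqP coords0 i.
have coord0 k : inner (tnth (vbasis W) k) Yd = 0.
  by have := congr1 (fun M : 'rV[R]_(\dim W) => M 0 k) coords0; rewrite !mxE.
have AiY : A i *m Y \in <<vbasis W>>%VS.
  by rewrite (span_basis (vbasisP W)) memv_span // (map_f _ (mem_enum _ i)).
rewrite (coord_span AiY) innerC inner_sumr big1 // => k _.
by rewrite innerZr innerC -tnth_nth coord0 mulr0.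
Qed.

Lemma dim_limg_span_coords : (\dim (limg (linfun span_coords)) <= m')%N.
Proof.
rewrite -dim_span; apply: (leq_trans (dimvS (subvf _))).
by rewrite dimvf dim_matrix; apply: eq_leq; exact: mul1n.
Qed.

Definition sym_range := (linfun (mulmx Y) @: limg (linfun (@symmetrize R p)))%VS.
Definition dir_range := limg (linfun (@mulmx R n 1 p u)).

Lemma dim_sym_range : ((p * (p + 1)) %/ 2 <= \dim sym_range)%N.
Proof.
rewrite /sym_range limg_dim_eq; first exact: dim_limg_symmetrize.
apply/eqP; rewrite -subv0; apply/subvP => M /memv_capP[_].
rewrite memv_ker lfunE memv0 /= => /eqP YM0.
by rewrite -[M]mul1mx -LY1 -mulmxA YM0 mulmx0.
Qed.

Lemma u_neq0 : u != 0.
Proof. by apply: contraNneq u_notin => ->; rewrite trmx0 sub0mx. Qed.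

Lemma dim_dir_range : \dim dir_range = p.
Proof.
rewrite /dir_range limg_dim_eq ?dimvf ?dim_matrix; first exact: mul1n.
apply/eqP; rewrite -subv0; apply/subvP => r /memv_capP[_].
rewrite memv_ker lfunE memv0 /= => /eqP ur0.
have : inner u u *: r = 0.
  by rewrite inner_col -mul_scalar_mx -mx11_scalar -mulmxA ur0 mulmx0.
move/eqP; rewrite scaler_eq0 => /orP[/eqP/inner_self_eq0/eqP|//].
by rewrite (negbTE u_neq0).
Qed.

Lemma sym_range_dir_range_disj : (sym_range :&: dir_range = 0)%VS.
Proof.
apply/eqP; rewrite -subv0; apply/subvP => _ /memv_capP[/memv_imgP[_ /memv_imgP[M _ ->] ->]].
case/memv_imgP => r _; rewrite !lfunE /= memv0 => YMr.
apply/eqP; rewrite YMr; have [->|r_neq0] := eqVneq r 0; first by rewrite mulmx0.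
case/negP: u_notin; set c := inner r^T r^T.
have c_neq0 : c != 0.
  by apply: contra r_neq0 => /eqP/inner_self_eq0 r0; rewrite -[r]trmxK r0 trmx0.
have rrT : r *m r^T = c%:M by rewrite /c inner_col trmxK -mx11_scalar.
have uE : u = c^-1 *: (Y *m symmetrize M *m r^T).
  by rewrite YMr -mulmxA rrT mul_mx_scalar scalerA mulVf ?scale1r.
apply/submxP; exists (c^-1 *: (r *m (symmetrize M)^T)).
by rewrite {1}uE linearZ /= !trmx_mul trmxK -scalemxAl mulmxA.
Qed.

Lemma dim_sym_range_cap_lker :
  (\dim (sym_range :&: lker (linfun span_coords)) + m' < (p * (p + 1)) %/ 2 + p)%N.
Proof.
set Q := (sym_range :&: lker (linfun span_coords))%VS.
have QK q : q \in Q -> exists2 K, symm K & q = Y *m K.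
  case/memv_capP => /memv_imgP[_ /memv_imgP[M _ ->] ->] _; rewrite !lfunE /=.
  by exists (symmetrize M); rewrite // /symm /symmetrize linearD /= trmxK addrC.
have QA q : q \in Q -> Aop A (q *m Y^T) = 0.
  case/memv_capP => _ /lker_span_coords_tangent qT; apply/matrixP => i j.
  by rewrite !mxE inner_mulmxr trmxK qT.
have [d affd] := affdim_exists (faceYY_gram hY).
have [X0 [s [FX0 Fs dimQ]]] := faceYY_dim_ge LY1 hY QK QA.
apply: leq_ltn_trans (face_dim (faceYY_is_face A b LY1) (relint_faceYY_gram LY1 hY) affd).
by rewrite leq_add2r (leq_trans dimQ (affd.2 X0 s FX0 Fs)).
Qed.

(* [Y Sym + u R^p] has dimension >= p(p+1)/2 + p, so it meets the kernel of the
   coordinate map in dimension > d; the part of that intersection lying in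
   [Y Sym] consists of feasible directions of the face, of dimension <= d. *)
Lemma tangent_direction_exists : exists K r, r != 0 /\ TY A Y (Y *m K + u *m r).
Proof.
set f := linfun span_coords; set U1 := sym_range; set U2 := dir_range.
have not_sub : ~~ ((U1 + U2) :&: lker f <= U1)%VS.
  apply/negP => sub.
  have cap_le : (\dim ((U1 + U2) :&: lker f) <= \dim (U1 :&: lker f))%N.
    by apply/dimvS; rewrite subv_cap sub capvSr.
  have := dimv_le_cap_lker f (U1 + U2).
  rewrite dimv_disjoint_sum ?sym_range_dir_range_disj // dim_dir_range.
  move: dim_sym_range dim_limg_span_coords dim_sym_range_cap_lker cap_le.
  move: (\dim U1) (\dim (limg f)) (\dim (U1 :&: lker f)) (\dim ((U1 + U2) :&: lker f)).
  move: ((p * (p + 1)) %/ 2)%N; lia.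
case/subvPn: not_sub => _ /memv_capP[/memv_addP[_ /memv_imgP[K' K'_sym ->]
  [_ /memv_imgP[r _ ->] ->]] yker] y_notin.
exists K', r; rewrite !lfunE /= in yker y_notin *.
split; last exact: lker_span_coords_tangent.
apply: contraNneq y_notin => ->; rewrite mulmx0 addr0 -lfunE.
exact: memv_img K'_sym.
Qed.

End TangentDirection.

Section SecondOrder.
Variables (R : realType) (n m p : nat) (A : 'I_m -> 'M[R]_n) (b : 'cV[R]_m).
Variables (Y : 'M[R]_(n, p)) (S : 'M[R]_n).
Hypotheses (hY : Mp A b Y) (sS : symm S) (SY0 : S *m Y = 0).
Hypothesis S_tangent_ge0 : forall Yd, TY A Y Yd -> 0 <= inner Yd (S *m Yd).

Lemma tangent_rank1_ge0 (v : 'cV[R]_n) (K : 'M[R]_p) (r : 'rV[R]_p) :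
  r != 0 -> TY A Y (Y *m K + v *m r) -> 0 <= inner v (S *m v).
Proof.
move=> r_neq0 /S_tangent_ge0.
rewrite mulmxDr mulmxA SY0 mul0mx add0r innerDl [inner (Y *m K) _]inner_mulmxl.
rewrite sS mulmxA SY0 mul0mx inner0l add0r mulmxA inner_mulmx_row pmulr_lge0 //.
rewrite lt_def inner_self_ge0 andbT; apply: contra r_neq0 => /eqP/inner_self_eq0 r0.
by rewrite -[r]trmxK r0 trmx0.
Qed.

Lemma psd_of_rank_lt : (\rank Y < p)%N -> psd S.
Proof.
move=> rank_lt v; rewrite qformE.
have /rowV0Pn[r /sub_kermxP rY r_neq0] : kermx Y^T != 0.
  by rewrite -mxrank_eq0 mxrank_ker mxrank_tr subn_eq0 -ltnNge.
apply: (tangent_rank1_ge0 (K := 0) r_neq0) => i.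
by rewrite mulmx0 add0r inner_mulmxr -mulmxA -[Y]trmxK -trmx_mul rY trmx0 mulmx0 inner0l.
Qed.

Lemma psd_of_full_rank (m' : nat) : \rank Y = p -> \dim (AYspan A Y) = m' ->
    (forall (F : 'M[R]_n -> Prop) (d : nat),
       is_face (feasC A b) F -> relint F (Y *m Y^T) -> affdim F d ->
       (d + m' < (p * (p + 1)) %/ 2 + p)%N) ->
  psd S.
Proof.
move=> rankY dim_span face_dim v.
have [B YtB] : exists B, Y^T *m B = 1%:M.
  by apply/row_freeP; rewrite /row_free mxrank_tr rankY.
have LY1 : B^T *m Y = 1%:M by rewrite -[Y]trmxK -trmx_mul YtB trmx1.
have [/submxP[D ->]|v_notin] := boolP (v^T <= Y^T)%MS.
  by rewrite -(mulmxA D) -sS -trmx_mul SY0 trmx0 mulmx0 mul0mx mxE.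
have [K [r [r_neq0 T]]] := tangent_direction_exists LY1 hY v_notin dim_span face_dim.
by rewrite qformE; exact: tangent_rank1_ge0 r_neq0 T.
Qed.

End SecondOrder.

Unset Implicit Arguments.

Theorem theorem3 (R : realType) (n m p m' : nat)
  (A : 'I_m -> 'M[R]_n) (b : 'cV[R]_m) (C : 'M[R]_n) :
  (forall i, symm (A i)) -> symm C ->
  Assumption1 p A b ->
  (forall Y : 'M[R]_(n, p), Mp A b Y -> \dim (AYspan A Y) = m') ->
  forall Y : 'M[R]_(n, p), Mp A b Y -> soc A C Y ->
  ((\rank Y < p)%N \/
   (\rank Y = p /\
    forall (F : 'M[R]_n -> Prop) (d : nat),
      is_face (feasC A b) F -> relint F (Y *m Y^T) -> affdim F d ->
      (d + m' < (p * (p + 1)) %/ 2 + p)%N)) ->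
  (forall Z : 'M[R]_(n, p), Mp A b Z -> gobj C Y <= gobj C Z) /\
  feasC A b (Y *m Y^T) /\
  (forall X : 'M[R]_n, feasC A b X -> inner C (Y *m Y^T) <= inner C X).
Proof.
(* Assumption 1 only serves to make [M_p] a manifold; the argument needs just
   the constant dimension [m'] of the span of the [A_i Y]. *)
move=> symA symC _ dim_span Y hY [H [_ [SY0 S_tangent_ge0]]] rank_cases.
set S := Smat A C Y H; set mu := H *m Aop A (C *m Y *m Y^T).
have sS : symm S by rewrite /symm /S /Smat linearB /= symC symm_Aadj.
have pS : psd S.
  case: rank_cases => [rank_lt|[rank_eq face_dim]].
    exact: psd_of_rank_lt sS SY0 S_tangent_ge0 rank_lt.
  exact (psd_of_full_rank hY sS SY0 S_tangent_ge0 rank_eq (dim_span Y hY) face_dim).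
have SYY : inner S (Y *m Y^T) = 0 by rewrite /inner sS mulmxA SY0 mul0mx mxtrace0.
have CS : C = S + Aadj A mu by rewrite /S /Smat subrK.
have opt := feasC_optimal_of_certificate CS sS pS (feasC_gram hY) SYY.
split=> [Z hZ|]; first by rewrite !gobjE; exact/opt/feasC_gram.
by split; [exact: feasC_gram | exact: opt].
Qed.
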